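(* Let ancillae $A_1,\dots,A_n$ consecutively measure a $d$-dimensional prepared quantum system $Q$, and let the ancilla $A_i$ be measured (amplified) by a detector $D_i$. Then for every $i$, $S(A_i)=S(D_i)$.
   Context: $Q$ is $d$-dimensional, initially in $|Q\rangle=\sum_{x_1}\alpha^{(1)}_{x_1}|\widetilde{x}_1\rangle$; ancilla $A_i$ measures in the orthonormal basis $\{|\widetilde{x}_i\rangle\}$ with $U^{(i)}_{x_{i-1}x_i}=\langle\widetilde{x}_i|\widetilde{x}_{i-1}\rangle$ unitary, via the unitary $\sum_x|\widetilde{x}_i\rangle\langle\widetilde{x}_i|\otimes U_x$, $U_x|0\rangle=|x\rangle$ on $Q$ and the $d$-dimensional ancilla (initially $|0\rangle$), consecutively, yielding $\sum_{x_1,\dots,x_n}\alpha^{(1)}_{x_1}U^{(2)}_{x_1x_2}\cdots U^{(n)}_{x_{n-1}x_n}|\widetilde{x}_n\rangle_Q|x_1\rangle_{A_1}\cdots|x_n\rangle_{A_n}$. Amplification by $D_i$ (initially $|0\rangle$) is the unitary $|x\rangle_{A_i}|0\rangle_{D_i}\mapsto|x\rangle_{A_i}|x\rangle_{D_i}$. $S$ denotes von Neumann entropy (log base $d$) of reduced states. *)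

From mathcomp Require Import all_boot all_algebra.
From mathcomp Require Import complex.
From mathcomp Require Import reals exp.
Set Implicit Arguments. Unset Strict Implicit. Unset Printing Implicit Defensive.
Import GRing.Theory Num.Theory.
Local Open Scope ring_scope.

Section QDefs.
Variable R : realType.
Notation C := R[i].

(* Spectrum (eigenvalues with multiplicity) of a square complex matrix:
   a sequence s with char_poly A = \prod_(z <- s) ('X - z). *)
Definition spectrum (m : nat) (A : 'M[C]_m) : seq C :=
  projT1 (closed_field_poly_normal (char_poly A)).

(* von Neumann entropy with logarithm in base d:
   S(rho) = - \sum_lambda lambda log_d lambda  (with 0 log 0 = 0, since ln 0 = 0). *)
Definition vN_entropy (d m : nat) (rho : 'M[C]_m) : R :=
  - \sum_(z <- spectrum rho) (complex.Re z * (ln (complex.Re z) / ln (d%:R))).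

(* Reduced density matrix of a d-level subsystem of a pure state psi on a finite
   configuration space T (computational basis).  The subsystem's value in a
   configuration is [get c], and [set c y] replaces it by y (leaving every other
   subsystem untouched).  rho x y = sum over other subsystems of psi(..x..) psi(..y..)^* *)
Definition reduced (T : finType) (d : nat) (get : T -> 'I_d) (set : T -> 'I_d -> T)
  (psi : T -> C) : 'M[C]_d :=
  \matrix_(x < d, y < d) \sum_(c : T | get c == x) psi c * (psi (set c y))^*.

(* Configuration space of Q (d levels), ancillae A_1..A_n and detectors D_1..D_n,
   each d-dimensional; ancilla/detector index i : 'I_n stands for i+1. *)
Definition config (d n : nat) : finType :=
  ('I_d * {ffun 'I_n -> 'I_d} * {ffun 'I_n -> 'I_d})%type.

Definition upd (d n : nat) (f : {ffun 'I_n -> 'I_d}) (i : 'I_n) (y : 'I_d) :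
  {ffun 'I_n -> 'I_d} := [ffun j => if j == i then y else f j].

Definition getAnc (d n : nat) (i : 'I_n) (c : config d n) : 'I_d := c.1.2 i.
Definition setAnc (d n : nat) (i : 'I_n) (c : config d n) (y : 'I_d) : config d n :=
  (c.1.1, upd c.1.2 i y, c.2).
Definition getDet (d n : nat) (i : 'I_n) (c : config d n) : 'I_d := c.2 i.
Definition setDet (d n : nat) (i : 'I_n) (c : config d n) (y : 'I_d) : config d n :=
  (c.1.1, c.1.2, upd c.2 i y).

Definition prevI (n : nat) (j : 'I_n) : 'I_n :=
  Ordinal (leq_ltn_trans (leq_pred j) (ltn_ord j)).

(* first (index 0, i.e. A_1) and last (index n-1, i.e. A_n) ancilla, built from
   any witness w : 'I_n (their values do not depend on w). *)
Definition firstI (n : nat) (w : 'I_n) : 'I_n :=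
  Ordinal (leq_ltn_trans (leq0n w) (ltn_ord w)).
Definition lastI (n : nat) (w : 'I_n) : 'I_n :=
  Ordinal (eq_ind_r is_true (leq_ltn_trans (leq0n w) (ltn_ord w)) (ltn_predL n)).

(* The bases: B i is the matrix whose column x is the vector |x~_(i+1)>
   in computational coordinates of Q.  Orthonormality of the basis. *)
Definition orthonormal_basis (d : nat) (B : 'M[C]_d) : Prop :=
  forall x y : 'I_d, \sum_(k < d) (B k x)^* * B k y = (x == y)%:R.

(* U^(i)_{x_(i-1) x_i} = <x~_i | x~_(i-1)>  (here for 0-based j, with j-1 = prevI j) *)
Definition Umat (d n : nat) (B : 'I_n -> 'M[C]_d) (j : 'I_n) (x y : 'I_d) : C :=
  \sum_(k < d) (B j k y)^* * B (prevI j) k x.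

(* State after the n consecutive measurements:
   sum_{x_1..x_n} alpha_{x_1} U^(2)_{x1x2} ... U^(n)_{x_(n-1)x_n}
       |x~_n>_Q |x_1>_{A_1} ... |x_n>_{A_n}, with all detectors still in |0>;
   here as a function of (q, a) where q is Q's computational index. *)
Definition measured_state (d n : nat) (B : 'I_n -> 'M[C]_d) (alpha : 'I_d -> C)
  (w : 'I_n) (q : 'I_d) (a : {ffun 'I_n -> 'I_d}) : C :=
  alpha (a (firstI w)) *
  (\prod_(j : 'I_n | (0 < j)%N) Umat B j (a (prevI j)) (a j)) *
  B (lastI w) q (a (lastI w)).

(* Amplification of every A_i by D_i (detectors initially |0>):
   |x>_{A_i}|0>_{D_i} |-> |x>_{A_i}|x>_{D_i}.  Applied to a state phi(q,a) with all
   detectors in |0>, the result has amplitude phi(q,a) on (q,a,a) and 0 elsewhere. *)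
Definition amplify (d n : nat) (phi : 'I_d -> {ffun 'I_n -> 'I_d} -> C)
  (c : config d n) : C :=
  if c.2 == c.1.2 then phi c.1.1 c.1.2 else 0.

End QDefs.

From mathcomp Require Import all_boot all_algebra.
From mathcomp Require Import complex.
From mathcomp Require Import reals exp.
Import GRing.Theory Num.Theory.
Local Open Scope ring_scope.

(* Amplification copies the ancillae into the detectors, so only configurations
   whose detector record equals the ancilla record carry amplitude.  On them,
   changing the value of A_i or of D_i to y gives a configuration with nonzero
   amplitude exactly when y is already the value of A_i, and then it is the
   same configuration.  Hence A_i and D_i have the same reduced density matrix
   for every measured state. *)

Lemma reduced_amplify_anc_det (R : realType) (d n : nat)
    (phi : 'I_d -> {ffun 'I_n -> 'I_d} -> R[i]) (i : 'I_n) :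
  reduced (getAnc i) (setAnc i) (amplify phi) =
  reduced (getDet i) (setDet i) (amplify phi).
Proof.
apply/matrixP=> x y; rewrite !mxE [LHS]big_mkcond [RHS]big_mkcond /=.
apply: eq_bigr => -[[q a] b] _.
rewrite /amplify /getAnc /getDet /setAnc /setDet /=.
have [->|_] := eqVneq b a; last by rewrite !mul0r !if_same.
by rewrite (eq_sym a); case: (upd a i y =P a) => [->|].
Qed.

Theorem lemma2 (R : realType) (d n : nat) (hd : (1 < d)%N)
  (B : 'I_n -> 'M[R[i]]_d) (alpha : 'I_d -> R[i])
  (hB : forall j : 'I_n, orthonormal_basis (B j))
  (halpha : \sum_(x < d) alpha x * (alpha x)^* = 1)
  (i : 'I_n) :
  let Psi := amplify (measured_state B alpha i) in
  vN_entropy d (reduced (getAnc i) (setAnc i) Psi) =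
  vN_entropy d (reduced (getDet i) (setDet i) Psi).
Proof. by rewrite /= reduced_amplify_anc_det. Qed.
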